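(* Let $G=(V,E)$ be a weighted strongly connected directed graph on $N$ vertices with edge weights $w_{uv}\ge 0$, and let $S_0\subseteq V$ be the initial set of mutants. If $G$ is a uniform circulation, i.e. there exists $m>0$ such that $\sum_{v\in V}w_{uv}=\sum_{v\in V}w_{vu}=m$ for all $u\in V$, then $\mathsf{fp}_{r=1}^{\delta}(G,S_0)=|S_0|/N$ for every $\delta\in[0,1]$.
   Context: Mixed $\delta$-updating on a weighted directed graph $G=(V,E)$ with $N$ vertices and weights $w_{uv}\ge 0$ ($u\to v\in E$ iff $w_{uv}>0$; self-loops allowed): each vertex holds a mutant (fitness $r>0$) or wild-type (fitness $1$); $f_S(u)\in\{1,r\}$ is the fitness at $u$ when $S$ is the mutant set. At each step, with probability $\delta$ a death-Birth step: choose $v\in V$ uniformly to die, then choose $u$ with probability proportional to $f_S(u)\,w_{uv}$, and $u$ copies its type onto $v$; with probability $1-\delta$ a Birth-death step: choose $u$ with probability proportional to $f_S(u)$, then choose $v$ with probability proportional to $w_{uv}$, and $u$ copies its type onto $v$. $\mathsf{fp}_r^\delta(G,S_0)$ is the probability that all vertices eventually become mutant starting from mutant set $S_0$. *)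

From HB Require Import structures.
From mathcomp Require Import all_boot all_order all_algebra.
From mathcomp Require Import all_classical all_reals all_analysis.
Set Implicit Arguments. Unset Strict Implicit. Unset Printing Implicit Defensive.
Import Order.TTheory GRing.Theory Num.Theory.
Local Open Scope ring_scope.

Section Moran.
Variables (R : realType) (V : finType).

Definition fitness (r : R) (S : {set V}) (u : V) : R := if u \in S then r else 1.

(* probability that, in one step of the mixed delta-updating process from
   mutant set S, vertex u copies its type onto vertex v *)
Definition pair_prob (w : V -> V -> R) (r delta : R) (S : {set V}) (u v : V) : R :=
  delta * ((#|V|%:R)^-1 *
            (fitness r S u * w u v / \sum_(x : V) fitness r S x * w x v))
  + (1 - delta) * ((fitness r S u / \sum_(x : V) fitness r S x) *
                   (w u v / \sum_(y : V) w u y)).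

Definition copy_step (S : {set V}) (u v : V) : {set V} :=
  if u \in S then v |: S else S :\ v.

Definition trans (w : V -> V -> R) (r delta : R) (S T : {set V}) : R :=
  \sum_(u : V) \sum_(v : V)
     (if copy_step S u v == T then pair_prob w r delta S u v else 0).

Fixpoint nstep (w : V -> V -> R) (r delta : R) (n : nat) (S T : {set V}) : R :=
  match n with
  | 0%N => if S == T then 1 else 0
  | n'.+1 => \sum_(U : {set V}) nstep w r delta n' S U * trans w r delta U T
  end.

Definition edge (w : V -> V -> R) : rel V := fun u v => 0 < w u v.

Definition strongly_connected (w : V -> V -> R) : Prop :=
  forall u v : V, connect (edge w) u v.

Definition uniform_circulation (w : V -> V -> R) : Prop :=
  exists m : R, 0 < m /\
    forall u : V, \sum_(v : V) w u v = m /\ \sum_(v : V) w v u = m.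

End Moran.

From HB Require Import structures.
From mathcomp Require Import all_boot all_order all_algebra.
From mathcomp Require Import all_classical all_reals all_analysis.
From mathcomp Require Import lra zify.
Import Order.TTheory GRing.Theory Num.Theory.
Import numFieldNormedType.Exports.
Set Implicit Arguments. Unset Strict Implicit. Unset Printing Implicit Defensive.
Local Open Scope ring_scope.

(* For r = 1 all fitnesses are equal, and since every vertex has in- and
   out-weight m, both the death-Birth and the Birth-death step let u copy onto
   v with probability w_uv / (N m), whatever delta.  The number of mutants is
   then a martingale: a step gains a mutant with the weight of the edges
   leaving the mutant set and loses one with the weight of the edges entering
   it, and the two agree because row and column sums coincide.  The sets
   {} and V are absorbing, and by strong connectivity every other mutant set
   grows by one vertex with probability at least some c > 0, so V is reached
   within N steps with probability at least c^N and the mass on the remaining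
   (transient) sets decays geometrically.  Hence
   N P(X_n = V) = |S0| - O(transient mass) tends to |S0|. *)

Lemma sum_if_eq_mulr (R : pzSemiRingType) (T : finType) (x : T) (a : R) (f : T -> R) :
  \sum_y (if x == y then a else 0) * f y = a * f x.
Proof.
rewrite (bigD1 x) //= eqxx big1 ?addr0 // => y; rewrite eq_sym => /negbTE ->.
by rewrite mul0r.
Qed.

Lemma ler_sum_term (R : numDomainType) (I : finType) (F : I -> R) (i : I) :
  (forall j, 0 <= F j) -> F i <= \sum_j F j.
Proof. by move=> F_ge0; rewrite (bigD1 i) //= lerDl sumr_ge0. Qed.

Lemma sumr_inv_card (R : numFieldType) (T : finType) :
  (0 < #|T|)%N -> \sum_(x : T) (#|T|%:R^-1 : R) = 1.
Proof.
by move=> T_gt0; rewrite sumr_const -[_ *+ _]mulr_natr mulVf // pnatr_eq0 -lt0n.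
Qed.

Lemma sum_absorbing_split (M : nmodType) (V : finType) (F : {set V} -> M) :
  (0 < #|V|)%N ->
  \sum_T F T = F [set: V] + F finset.set0
             + \sum_(T | (T != finset.set0) && (T != [set: V])) F T.
Proof.
case/card_gt0P => x _.
have setT_neq0 : [set: V] != finset.set0 by apply/set0Pn; exists x; rewrite inE.
rewrite (bigD1 [set: V]) //= (bigD1 finset.set0) 1?eq_sym //= addrA.
by congr (_ + _); apply: eq_bigl => T; rewrite andbC.
Qed.

Lemma connect_exit_edge (T : finType) (e : rel T) (A : {pred T}) s t :
  connect e s t -> s \in A -> t \notin A ->
  exists u v, [/\ u \in A, v \notin A & e u v].
Proof.
move/connectP => [p e_p ->]; elim: p s e_p => [|z p IH] s /= e_p sA tNA.
  by rewrite sA in tNA.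
case/andP: e_p => e_sz e_p; have [zA|zNA] := boolP (z \in A).
  exact: IH e_p zA tNA.
by exists s, z.
Qed.

Lemma cvg0_of_periodic_contraction (R : realType) (u : R ^nat) (k : nat) (rho : R) :
  (forall n, 0 <= u n) -> nonincreasing_seq u -> 0 <= rho < 1 ->
  (forall n, u (n + k)%N <= rho * u n) -> (u @ \oo --> 0)%classic.
Proof.
move=> u_ge0 u_noninc /andP[rho_ge0 rho_lt1] u_contr.
have u_geo j : u (j * k)%N <= geometric (u 0%N) rho j.
  elim: j => [|j IH]; first by rewrite /= mul0n expr0 mulr1.
  rewrite mulSn addnC /= exprS mulrCA; apply: le_trans (u_contr _) _.
  exact: ler_wpM2l.
have /cvgrPdist_lt geo_cvg0 : (geometric (u 0%N) rho @ \oo --> 0)%classic.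
  by apply: cvg_geometric; rewrite ger0_norm.
apply/cvgrPdist_lt => e e_gt0.
have [j0 _ j0_small] := geo_cvg0 e e_gt0.
exists (j0 * k)%N => // n /= j0k_le_n.
rewrite sub0r normrN ger0_norm //.
apply: le_lt_trans (u_noninc _ _ j0k_le_n) _; apply: le_lt_trans (u_geo j0) _.
have := j0_small j0 (leqnn j0); rewrite /= sub0r normrN ger0_norm //.
by rewrite mulr_ge0 ?exprn_ge0.
Qed.

Section MutantSetChain.
Variables (R : realType) (V : finType) (w : V -> V -> R) (r delta : R).
Local Notation P := (trans w r delta).
Local Notation Pn := (nstep w r delta).

Lemma nstep1 S T : Pn 1 S T = P S T.
Proof. by rewrite /= sum_if_eq_mulr mul1r. Qed.

Lemma nstepD n k S T : Pn (n + k) S T = \sum_U Pn n S U * Pn k U T.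
Proof.
elim: k T => [|k IH] T /=.
  rewrite addn0 (bigD1 T) //= eqxx mulr1 big1 ?addr0 // => U /negbTE ->.
  by rewrite mulr0.
rewrite addnS /=; under eq_bigr do rewrite IH mulr_suml.
rewrite exchange_big /=; apply: eq_bigr => U _.
by rewrite mulr_sumr; apply: eq_bigr => W _; rewrite mulrA.
Qed.

Lemma nstep_harmonic (f : {set V} -> R) :
  (forall S, \sum_T P S T * f T = f S) ->
  forall n S, \sum_T Pn n S T * f T = f S.
Proof.
move=> f_harm; elim=> [|n IH] S /=; first by rewrite sum_if_eq_mulr mul1r.
under eq_bigr do rewrite mulr_suml.
rewrite exchange_big /= -[RHS]IH; apply: eq_bigr => U _.
by rewrite -f_harm mulr_sumr; apply: eq_bigr => T _; rewrite mulrA.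
Qed.

Hypothesis trans_ge0 : forall S T, 0 <= P S T.

Lemma nstep_ge0 n S T : 0 <= Pn n S T.
Proof.
elim: n T => [|n IH] T /=; first by case: ifP.
by apply: sumr_ge0 => U _; rewrite mulr_ge0.
Qed.

Lemma nstep_absorbing_nondecreasing A S :
  P A A = 1 -> nondecreasing_seq (fun n => Pn n S A).
Proof.
move=> PAA; apply/nondecreasing_seqP => n /=.
rewrite -[X in X <= _]mulr1 -[X in _ * X <= _]PAA.
apply: (ler_sum_term (F := fun U => Pn n S U * P U A)) => U.
by rewrite mulr_ge0 ?nstep_ge0.
Qed.

Hypotheses (trans_setT : P [set: V] [set: V] = 1)
           (trans_set0 : P finset.set0 finset.set0 = 1).

Variable c : R.
Hypotheses (c_gt0 : 0 < c) (c_le1 : c <= 1).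
Hypothesis trans_grow : forall S, S != finset.set0 -> S != [set: V] ->
  exists2 v, v \notin S & c <= P S (v |: S).

Lemma nstep_fixation_ge k S : S != finset.set0 -> (#|V| - #|S| <= k)%N ->
  c ^+ k <= Pn k S [set: V].
Proof.
elim: k S => [|k IH] S S_neq0 k_ge.
  suff -> : S = [set: V] by rewrite /= eqxx expr0.
  by apply/eqP; rewrite eqEcard finset.subsetT cardsT -subn_eq0 -leqn0.
have [->|S_neqT] := eqVneq S [set: V].
  apply: le_trans (exprn_ile1 _ (ltW c_gt0) c_le1) _.
  have := nstep_absorbing_nondecreasing [set: V] trans_setT (leq0n k.+1).
  by rewrite /= eqxx.
have [v vNS c_le] := trans_grow S_neq0 S_neqT.
have vS_neq0 : v |: S != finset.set0 by apply/set0Pn; exists v; rewrite setU11.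
have k_ge' : (#|V| - #|v |: S| <= k)%N.
  by rewrite cardsU1 vNS; lia.
rewrite exprS -add1n nstepD.
apply: le_trans (ler_sum_term (F := fun U => Pn 1 S U * Pn k U [set: V]) (v |: S) _).
  by rewrite nstep1 ler_pM ?exprn_ge0 ?(ltW c_gt0) ?IH.
by move=> U; rewrite mulr_ge0 ?nstep_ge0.
Qed.

Hypothesis V_gt0 : (0 < #|V|)%N.
Hypothesis trans_sum1 : forall S, \sum_T P S T = 1.
Hypothesis trans_card : forall S, \sum_T P S T * #|T|%:R = #|S|%:R.

Definition transient_mass n S :=
  \sum_(T | (T != finset.set0) && (T != [set: V])) Pn n S T.

Lemma transient_mass_ge0 n S : 0 <= transient_mass n S.
Proof. by apply: sumr_ge0 => T _; apply: nstep_ge0. Qed.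

Lemma transient_massE n S :
  transient_mass n S = 1 - Pn n S [set: V] - Pn n S finset.set0.
Proof.
have trans_sum1' S' : \sum_T P S' T * 1 = 1.
  by under eq_bigr do rewrite mulr1; apply: trans_sum1.
have := nstep_harmonic trans_sum1' n S.
rewrite (sum_absorbing_split _ V_gt0) !mulr1 => <-.
rewrite /transient_mass; under [in RHS]eq_bigr do rewrite mulr1; lra.
Qed.

Lemma transient_mass_nonincreasing S : nonincreasing_seq (transient_mass ^~ S).
Proof.
apply/nonincreasing_seqP => n; rewrite !transient_massE.
have := nstep_absorbing_nondecreasing S trans_setT (leqnSn n).
have := nstep_absorbing_nondecreasing S trans_set0 (leqnSn n).
by move=> /= ? ?; lra.
Qed.

Lemma transient_mass_contraction n S :
  transient_mass (n + #|V|) S <= (1 - c ^+ #|V|) * transient_mass n S.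
Proof.
set eps := c ^+ #|V|.
have setT_stays : 1 <= Pn #|V| [set: V] [set: V].
  have := nstep_absorbing_nondecreasing [set: V] trans_setT (leq0n #|V|).
  by rewrite /= eqxx.
have gain : Pn n S [set: V] + eps * transient_mass n S <= Pn (n + #|V|) S [set: V].
  rewrite nstepD (sum_absorbing_split _ V_gt0) -addrA lerD //.
    by rewrite ler_peMr ?nstep_ge0.
  rewrite -[X in X <= _]add0r lerD ?mulr_ge0 ?nstep_ge0 //.
  rewrite /transient_mass mulr_sumr; apply: ler_sum => T /andP[T_neq0 _].
  by rewrite mulrC ler_wpM2l ?nstep_ge0 ?nstep_fixation_ge ?leq_subr.
have := nstep_absorbing_nondecreasing S trans_set0 (leq_addr #|V| n).
move: gain; rewrite !transient_massE /= => ? ?; lra.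
Qed.

Lemma nstep_setT_bounds n (S : {set V}) :
  #|S|%:R / #|V|%:R - transient_mass n S <= Pn n S [set: V] <= #|S|%:R / #|V|%:R.
Proof.
have V_pos : (0 : R) < #|V|%:R by rewrite ltr0n.
have := nstep_harmonic trans_card n S.
rewrite (sum_absorbing_split _ V_gt0) cardsT cards0 mulr0 addr0 => <-.
set X := \sum_(T | _) _.
have X_ge0 : 0 <= X by apply: sumr_ge0 => T _; rewrite mulr_ge0 ?nstep_ge0.
have X_le : X <= transient_mass n S * #|V|%:R.
  rewrite /transient_mass mulr_suml; apply: ler_sum => T _.
  by rewrite ler_wpM2l ?nstep_ge0 // ler_nat max_card.
rewrite mulrDl mulfK ?gt_eqF // lerDl divr_ge0 ?(ltW V_pos) // andbT.
by rewrite lerBlDr lerD2l ler_pdivrMr.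
Qed.

Local Open Scope classical_set_scope.

Lemma transient_mass_cvg0 S : transient_mass ^~ S @ \oo --> 0.
Proof.
have eps_gt0 : 0 < c ^+ #|V| by rewrite exprn_gt0.
have eps_le1 : c ^+ #|V| <= 1 by apply: exprn_ile1 (ltW c_gt0) c_le1.
apply: (cvg0_of_periodic_contraction (k := #|V|) (rho := 1 - c ^+ #|V|)).
- by move=> n; apply: transient_mass_ge0.
- exact: transient_mass_nonincreasing.
- by apply/andP; split; lra.
- by move=> n; apply: transient_mass_contraction.
Qed.

Lemma nstep_setT_cvg (S : {set V}) :
  (fun n => Pn n S [set: V]) @ \oo --> (#|S|%:R / #|V|%:R : R).
Proof.
apply: (squeeze_cvgr (f := fun n => #|S|%:R / #|V|%:R - transient_mass n S)
                     (h := fun=> #|S|%:R / #|V|%:R)).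
- by apply: nearW => n; apply: nstep_setT_bounds.
- rewrite -[X in _ --> X]subr0.
  by apply: cvgB; [apply: cvg_cst | apply: transient_mass_cvg0].
- exact: cvg_cst.
Qed.

End MutantSetChain.

Section CopyStep.
Variables (R : realType) (V : finType).
Implicit Types (S : {set V}) (u v : V).

Lemma card_copy_step S u v :
  #|copy_step S u v|%:R = #|S|%:R + (u \in S)%:R - (v \in S)%:R :> R.
Proof.
rewrite /copy_step; have [uS|uNS] := boolP (u \in S).
  rewrite cardsU1 natrD.
  by case: (v \in S); [rewrite add0r addrK | rewrite subr0 addrC].
by rewrite [in RHS](cardsD1 v S) natrD addr0 addrC addKr.
Qed.

Lemma copy_step_setT u v : copy_step [set: V] u v = [set: V].
Proof. by rewrite /copy_step inE finset.setUT. Qed.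

Lemma copy_step_set0 u v : copy_step finset.set0 u v = finset.set0.
Proof. by rewrite /copy_step inE finset.set0D. Qed.

Variables (w : V -> V -> R) (r delta : R).

Lemma trans_expectation S (f : {set V} -> R) :
  \sum_T trans w r delta S T * f T
  = \sum_u \sum_v pair_prob w r delta S u v * f (copy_step S u v).
Proof.
under eq_bigr do rewrite /trans mulr_suml; rewrite exchange_big; apply: eq_bigr => u _.
under eq_bigr do rewrite mulr_suml; rewrite exchange_big; apply: eq_bigr => v _.
exact: sum_if_eq_mulr.
Qed.

End CopyStep.

Section NeutralCirculation.
Variables (R : realType) (V : finType) (w : V -> V -> R) (m delta : R).
Hypotheses (V_gt0 : (0 < #|V|)%N) (m_gt0 : 0 < m).
Hypotheses (w_row : forall u, \sum_v w u v = m) (w_col : forall v, \sum_u w u v = m).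
Implicit Types (S : {set V}) (u v : V).
Local Notation p := (pair_prob w 1 delta).

Lemma pair_prob_neutral S u v : p S u v = w u v / (#|V|%:R * m).
Proof.
have fit1 x : fitness 1 S x = 1 :> R by rewrite /fitness; case: ifP.
have sum_fit : \sum_(x : V) fitness 1 S x = #|V|%:R :> R.
  by under eq_bigr do rewrite fit1; rewrite sumr_const.
have sum_fit_w : \sum_(x : V) fitness 1 S x * w x v = m.
  by under eq_bigr do rewrite fit1 mul1r; apply: w_col.
rewrite /pair_prob sum_fit sum_fit_w w_row !fit1 !mul1r.
by rewrite -mulrDl subrKC mul1r invfM mulrCA.
Qed.

Lemma sum_pair_prob_row S u : \sum_v p S u v = #|V|%:R^-1.
Proof.
under eq_bigr do rewrite pair_prob_neutral.
by rewrite -mulr_suml w_row invfM mulrCA mulfV ?mulr1 // gt_eqF.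
Qed.

Lemma sum_pair_prob_col S v : \sum_u p S u v = #|V|%:R^-1.
Proof.
under eq_bigr do rewrite pair_prob_neutral.
by rewrite -mulr_suml w_col invfM mulrCA mulfV ?mulr1 // gt_eqF.
Qed.

Lemma sum_pair_prob S : \sum_u \sum_v p S u v = 1.
Proof. by under eq_bigr do rewrite sum_pair_prob_row; apply: sumr_inv_card. Qed.

Lemma neutral_trans_sum1 S : \sum_T trans w 1 delta S T = 1.
Proof.
transitivity (\sum_T trans w 1 delta S T * 1).
  by apply: eq_bigr => T _; rewrite mulr1.
rewrite trans_expectation -[RHS](sum_pair_prob S).
by under eq_bigr do under eq_bigr do rewrite mulr1.
Qed.

Lemma neutral_trans_card S : \sum_T trans w 1 delta S T * #|T|%:R = #|S|%:R.
Proof.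
rewrite trans_expectation.
under eq_bigr do under eq_bigr do rewrite card_copy_step mulrBr mulrDr.
under eq_bigr do rewrite sumrB big_split /= -!mulr_suml sum_pair_prob_row.
rewrite sumrB big_split /= [X in _ - X]exchange_big /=.
under [X in _ - X]eq_bigr do rewrite -mulr_suml sum_pair_prob_col.
by rewrite addrK -mulr_suml sumr_inv_card ?mul1r.
Qed.

Lemma neutral_trans_fixed S :
  (forall u v, copy_step S u v = S) -> trans w 1 delta S S = 1.
Proof.
move=> S_fixed; rewrite /trans -[RHS](sum_pair_prob S).
by apply: eq_bigr => u _; apply: eq_bigr => v _; rewrite S_fixed eqxx.
Qed.

Hypothesis w_ge0 : forall u v, 0 <= w u v.

Lemma neutral_pair_prob_ge0 S u v : 0 <= p S u v.
Proof. by rewrite pair_prob_neutral divr_ge0 ?mulr_ge0 ?(ltW m_gt0). Qed.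

Lemma neutral_trans_ge0 S T : 0 <= trans w 1 delta S T.
Proof.
apply: sumr_ge0 => u _; apply: sumr_ge0 => v _.
by case: ifP => _; rewrite ?neutral_pair_prob_ge0.
Qed.

Hypothesis w_connected : strongly_connected w.

Lemma neutral_trans_grow : exists c : R, [/\ 0 < c, c <= 1 &
  forall S, S != finset.set0 -> S != [set: V] ->
    exists2 v, v \notin S & c <= trans w 1 delta S (v |: S)].
Proof.
exists (\big[Order.min/1]_(e : V * V | 0 < w e.1 e.2) (w e.1 e.2 / (#|V|%:R * m))).
split; first by apply: lt_bigmin => // e w_e_gt0; rewrite divr_gt0 ?mulr_gt0 ?ltr0n.
  exact: bigmin_le_id.
move=> S /set0Pn[s sS]; rewrite -properT => /properP[_ [t _ tNS]].
have [u [v [uS vNS w_uv]]] := connect_exit_edge (w_connected s t) sS tNS.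
exists v => //; apply: le_trans (bigmin_le_cond _ (j := (u, v)) _ w_uv) _.
rewrite /= -(pair_prob_neutral S) /trans (bigD1 u) //= (bigD1 v) //=.
rewrite /copy_step uS eqxx -addrA lerDl addr_ge0 //.
  by apply: sumr_ge0 => v' _; case: ifP => _; rewrite ?neutral_pair_prob_ge0.
apply: sumr_ge0 => u' _; apply: sumr_ge0 => v' _.
by case: ifP => _; rewrite ?neutral_pair_prob_ge0.
Qed.

End NeutralCirculation.

Local Open Scope classical_set_scope.

Theorem mainTheorem2 (R : realType) (V : finType) (w : V -> V -> R)
  (S0 : {set V}) (delta : R) :
  (0 < #|V|)%N ->
  (forall u v : V, 0 <= w u v) ->
  strongly_connected w ->
  uniform_circulation w ->
  0 <= delta <= 1 ->
  (fun n : nat => nstep w 1 delta n S0 [set: V]) @ \oo -->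
    (#|S0|%:R / #|V|%:R : R).
Proof.
move=> V_gt0 w_ge0 w_connected [m [m_gt0 w_sums]] _.
have w_row u : \sum_v w u v = m by have [] := w_sums u.
have w_col v : \sum_u w u v = m by have [] := w_sums v.
have [c [c_gt0 c_le1 grow]] :=
  neutral_trans_grow delta V_gt0 m_gt0 w_row w_col w_ge0 w_connected.
have trans_fixed := neutral_trans_fixed delta V_gt0 m_gt0 w_row w_col.
apply: (nstep_setT_cvg _ _ _ c_gt0 c_le1 grow V_gt0).
- exact: neutral_trans_ge0 delta m_gt0 w_row w_col w_ge0.
- exact: trans_fixed (@copy_step_setT V).
- exact: trans_fixed (@copy_step_set0 V).
- exact: neutral_trans_sum1 delta V_gt0 m_gt0 w_row w_col.
- exact: neutral_trans_card delta V_gt0 m_gt0 w_row w_col.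
Qed.
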